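(* Let $(G_i)_{i\in I}$ be a finite family of finite groups, $G=\prod_{i\in I}G_i$, $\pi_i\colon G\to G_i$ the projections, and $H\le G$ a subgroup. If $HM(G)=G$ and $\pi_i(H)=G_i$ for all $i\in I$, then $H=G$.
   Context: For a finite group $G$, $M(G)$ (the Melnikov subgroup) is the intersection of all maximal normal subgroups of $G$. *)

From HB Require Import structures.
From mathcomp Require Import all_boot all_order all_fingroup all_solvable.
Set Implicit Arguments. Unset Strict Implicit. Unset Printing Implicit Defensive.

(* We intersect with G so that
   M(1) = 1 (empty intersection convention inside G). *)
Definition Melnikov (gT : finGroupType) (G : {set gT}) : {set gT} :=
  G :&: \bigcap_(M : {group gT} | maxnormal M G G) M.

From HB Require Import structures.
From mathcomp Require Import all_boot all_order all_fingroup all_solvable.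

Set Implicit Arguments. Unset Strict Implicit. Unset Printing Implicit Defensive.
Open Scope group_scope.

(* Let K_s be the intersection of the kernels of the projections pi_j, j in s.
   By induction on s we show H K_s = G; for s exhausting I this is H = G.
   When the index i is added to s it suffices that pi_i(H :&: K_s) = G_i.
   Otherwise pi_i(H :&: K_s) lies in a maximal normal subgroup N of G_i, and
   A = pi_i^-1(N) is a maximal normal subgroup of G containing H :&: K_s.
   Then B = (H :&: A) K_s is maximal normal too, since
   G/B = HB/B ~ H/(H :&: A) ~ HA/A = G/A.  As H M(G) = G and M(G) <= A :&: B,
   Dedekind's law gives B = (B :&: H)(A :&: B) <= A, so G_i = pi_i(K_s) <= N,
   a contradiction. *)

Lemma Melnikov_sub_maxnormal (gT : finGroupType) (G A : {group gT}) :
  maxnormal A G G -> Melnikov G \subset A.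
Proof. by move=> maxA; rewrite subIset // orbC bigcap_inf. Qed.

Lemma maxnormal_exists (gT : finGroupType) (G X : {group gT}) :
  X <| G -> X \proper G -> {N : {group gT} | maxnormal N G G & X \subset N}.
Proof. by case/andP=> _ nXG ltXG; apply: maxgroup_exists; rewrite ltXG. Qed.

Lemma isog_quotient_maxnormal (gT rT : finGroupType) (G A : {group gT})
    (G' A' : {group rT}) :
  A <| G -> A' <| G' -> G / A \isog G' / A' ->
  maxnormal A G G = maxnormal A' G' G'.
Proof.
by move=> nsAG nsA'G' isoGG'; rewrite -!quotient_simple ?(isog_simple isoGG').
Qed.

Lemma morphpre_maxnormal (gT rT : finGroupType) (G : {group gT})
    (f : {morphism G >-> rT}) (N : {group rT}) :
  maxnormal N (f @* G) (f @* G) -> maxnormal (f @*^-1 N) G G.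
Proof.
move=> maxN; have nsNfG := maxnormal_normal maxN.
have sNfG := normal_sub nsNfG.
have nsAG : f @*^-1 N <| G.
  by move: nsNfG; rewrite -(morphpre_normal sNfG) // morphimGK ?subsetIl.
have sGdom : G \subset f @*^-1 'N(N) by rewrite -sub_morphim_pre ?normal_norm.
have := first_isog_loc [morphism of coset N \o f] sGdom.
rewrite ker_comp ker_coset morphim_comp setIC (setIidPl (subsetIl _ _)).
move=> isoGfG.
by rewrite (isog_quotient_maxnormal nsAG nsNfG isoGfG).
Qed.

Section MelnikovSupplement.

Variables (gT : finGroupType) (G H K : {group gT}).
Hypotheses (sHG : H \subset G) (nsKG : K <| G) (defG : H * K = G).
Hypothesis HMG : H * Melnikov G = G.

Lemma setI_join_supplement (A : {group gT}) :
  H :&: K \subset A -> (H :&: A) <*> K :&: H = H :&: A.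
Proof.
move=> sHKA; have nKHA : H :&: A \subset 'N(K).
  exact: subset_trans (subsetIl _ _) (subset_trans sHG (normal_norm nsKG)).
rewrite norm_joinEl // -group_modl ?subsetIl //.
by rewrite mulGSid // subsetI subsetIr /= setIC.
Qed.

Lemma maxnormal_join_supplement (A : {group gT}) :
  maxnormal A G G -> H :&: K \subset A -> maxnormal ((H :&: A) <*> K) G G.
Proof.
move=> maxA sHKA; set B := (H :&: A) <*> K.
have nsAG := maxnormal_normal maxA.
have nsBG : B <| G.
  apply/andP; split.
    by rewrite join_subG (subset_trans (subsetIl _ _) sHG) normal_sub.
  rewrite -{1}defG mul_subG ?(subset_trans (joing_subr _ _) (normG B)) //.
  by rewrite normsY ?normsI ?normG ?(subset_trans sHG) ?normal_norm.
have defGA : H * A = G.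
  apply/eqP; rewrite eqEsubset mul_subG ?(normal_sub nsAG) //=.
  by rewrite -{1}HMG mulgS ?Melnikov_sub_maxnormal.
have defGB : H * B = G.
  apply/eqP; rewrite eqEsubset mul_subG ?(normal_sub nsBG) //=.
  by rewrite -{1}defG mulgS ?joing_subr.
have nBH : H \subset 'N(B) := subset_trans sHG (normal_norm nsBG).
have nAH : H \subset 'N(A) := subset_trans sHG (normal_norm nsAG).
have isoB := weak_second_isog nBH; rewrite defGB in isoB.
have isoA := weak_second_isog nAH; rewrite defGA setIC in isoA.
have isoBA : G / B \isog G / A.
  by apply: isog_trans (isog_symr isoB) _; rewrite setI_join_supplement.
by rewrite (isog_quotient_maxnormal nsBG nsAG isoBA).
Qed.

Lemma Melnikov_supplement_sub (A : {group gT}) :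
  maxnormal A G G -> H :&: K \subset A -> K \subset A.
Proof.
move=> maxA sHKA; set B := (H :&: A) <*> K.
have maxB : maxnormal B G G := maxnormal_join_supplement maxA sHKA.
have sMAB : Melnikov G \subset A :&: B.
  by rewrite subsetI !Melnikov_sub_maxnormal.
suff sBA : B \subset A by apply: subset_trans (joing_subr _ _) sBA.
have defB : (B :&: H) * (A :&: B) = B.
  rewrite group_modr ?subsetIr //; apply/setIidPl.
  by apply: subset_trans (maxnormal_sub maxB) _; rewrite -{1}HMG mulgS.
by rewrite -defB setI_join_supplement // mul_subG ?subsetIr ?subsetIl.
Qed.

Lemma morphim_Melnikov_supplement (rT : finGroupType)
    (f : {morphism G >-> rT}) :
  f @* H = f @* G -> f @* K = f @* G -> f @* (H :&: K) = f @* G.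
Proof.
move=> fHG fKG.
have sHKG : H :&: K \subset G := subset_trans (subsetIl _ _) sHG.
have nsX : f @* (H :&: K) <| f @* G.
  by rewrite -fHG morphim_normal // (normalGI sHG nsKG).
apply/eqP; rewrite eqEproper (normal_sub nsX); apply/negP => ltX.
have [N maxN sXN] := maxnormal_exists nsX ltX.
have maxA := morphpre_maxnormal maxN.
have sKA : K \subset f @*^-1 N.
  by apply: Melnikov_supplement_sub maxA _; rewrite -sub_morphim_pre.
have := maxnormal_proper maxN.
by rewrite /= -fKG properE sub_morphim_pre ?(normal_sub nsKG) // sKA andbF.
Qed.

End MelnikovSupplement.

Lemma mulg_ker_supplement (gT rT : finGroupType) (D H K : {group gT})
    (f : {morphism D >-> rT}) :
  K \subset D -> f @* (H :&: K) = f @* K -> H * ('ker f :&: K) = H * K.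
Proof.
move=> sKD fHK.
have sHKD : H :&: K \subset D := subset_trans (subsetIr _ _) sKD.
have sK_HKker : K \subset (H :&: K) * 'ker f.
  rewrite (normC (subset_trans sHKD (ker_norm f))) -morphimK //.
  by rewrite -sub_morphim_pre // fHK.
have defK : (H :&: K) * ('ker f :&: K) = K.
  by rewrite group_modl ?subsetIr // (setIidPr sK_HKker).
by rewrite -{2}defK mulgA (mulGSid (subsetIl H K)).
Qed.

Section DirectProduct.

Variables (I : finType) (gT : I -> finGroupType).
Local Notation gTn := {dffun forall i : I, gT i}.
Local Notation pi i := (@dffun_morphism I gT i).

Lemma bigcap_ker_dffun_normal (J : {pred I}) :
  \bigcap_(j in J) 'ker (pi j) <| [set: gTn].
Proof.
rewrite /normal subsetT norms_bigcap //; apply/bigcapsP => j _.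
exact: normal_norm (ker_normal (pi j)).
Qed.

Lemma morphim_dffun_bigcap_ker (J : {pred I}) i :
  i \notin J -> pi i @* (\bigcap_(j in J) 'ker (pi j)) = [set: gT i].
Proof.
move=> iJ; apply/eqP; rewrite eqEsubset subsetT; apply/subsetP => x _.
apply/morphimP; exists (dfung1 x); rewrite ?inE //=; last by rewrite dfung1_id.
apply/bigcapP => j jJ; rewrite !inE /= dfung1_dflt //.
by apply: contraNneq iJ => ->.
Qed.

Lemma bigcap_ker_dffun : \bigcap_(j in I) 'ker (pi j) = 1.
Proof.
apply/setP => x; rewrite inE; apply/bigcapP/eqP => [x1|-> j _]; last first.
  by rewrite !inE /= ffunE.
by apply/ffunP => j; have := x1 j isT; rewrite !inE /= ffunE => /eqP.
Qed.

Lemma mulg_bigcap_ker_dffun (H : {group gTn}) (s : seq I) :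
    H * Melnikov [set: gTn] = [set: gTn] ->
    (forall i, pi i @* H = [set: gT i]) ->
  uniq s -> H * (\bigcap_(j in s) 'ker (pi j)) = [set: gTn].
Proof.
move=> HMG piH; elim: s => [|i s IHs].
  by rewrite big_pred0 ?mulSGid ?subsetT.
move=> uniq_is; have /andP[i_s uniq_s] := uniq_is.
rewrite -(big_uniq _ uniq_is) big_cons (big_uniq _ uniq_s).
have nsK : \bigcap_(j in s) 'ker (pi j) <| [set: gTn].
  exact: bigcap_ker_dffun_normal.
have piK := morphim_dffun_bigcap_ker i_s.
have piT : pi i @* [set: gTn] = [set: gT i].
  by apply/eqP; rewrite eqEsubset subsetT -{1}(piH i) morphimS ?subsetT.
have defG := IHs uniq_s.
rewrite mulg_ker_supplement ?subsetT ?defG // piK -piT.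
apply: (morphim_Melnikov_supplement (subsetT H) nsK defG HMG).
  by rewrite piH piT.
by rewrite piK piT.
Qed.

End DirectProduct.

Theorem mainTheorem14 (I : finType) (gT : I -> finGroupType)
    (H : {group {dffun forall i : I, gT i}}) :
  (H * Melnikov [set: {dffun forall i : I, gT i}])%g
    = [set: {dffun forall i : I, gT i}] ->
  (forall i : I, (@dffun_morphism I gT i @* H)%g = [set: gT i]) ->
  (H : {set _}) = [set: {dffun forall i : I, gT i}].
Proof.
move=> HMG piH.
have := mulg_bigcap_ker_dffun HMG piH (enum_uniq I).
by rewrite (eq_bigl _ _ (mem_enum I)) bigcap_ker_dffun mulg1.
Qed.
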